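(* Fix integers $k\ge 1$ and a real $\Delta>0$. For $n\ge k$ let $m=m(n)=\lfloor \Delta n\rfloor$ and let $V=(V_1,\dots,V_m)\sim\mathbf{P}_{\text{unif}}$. Then there is a sequence $\epsilon_n\to 0$ (as $n\to\infty$, depending only on $k$ and $\Delta$) such that for all $n\ge k$, $$\frac{\mathbf{E}[Z(V)^2]}{\mathbf{E}[Z(V)]^2}\le 1+\epsilon_n+\frac{1}{\mathbf{E}[Z(V)]}.$$
   Context: A $k$-flat of $\mathbb{F}_2^n$ is an affine subspace of dimension $n-k$; equivalently a set $\{x\in\mathbb{F}_2^n : \ell_i(x)=\varepsilon_i \ \forall i\in[k]\}$ where $\ell_1,\dots,\ell_k$ are linearly independent linear forms on $\mathbb{F}_2^n$ and $\varepsilon_1,\dots,\varepsilon_k\in\mathbb{F}_2$. Let $q_0$ be the uniform distribution on the set of all $k$-flats of $\mathbb{F}_2^n$, and $\mathbf{P}_{\text{unif}}:=q_0^{\otimes m}$ (i.e. $V_1,\dots,V_m$ i.i.d. uniform $k$-flats). For $V=(V_1,\dots,V_m)$, let $\mathcal{S}(V)=\mathbb{F}_2^n\setminus\bigcup_{j=1}^m V_j$ and $Z(V)=|\mathcal{S}(V)|$. Expectations are under $\mathbf{P}_{\text{unif}}$. *)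

From HB Require Import structures.
From mathcomp Require Import all_boot all_order all_algebra.
Set Implicit Arguments. Unset Strict Implicit. Unset Printing Implicit Defensive.
Import Order.TTheory GRing.Theory Num.Theory.
Local Open Scope ring_scope.

Definition pt (n : nat) := 'rV['F_2]_n.

(* The set of all k-flats of F_2^n: sets {x | x *m L = e} where the k columns of
   L : 'M_(n,k) are linearly independent linear forms (rank L = k) and e : 'rV_k. *)
Definition flats (n k : nat) : {set {set pt n}} :=
  [set A : {set pt n} | [exists L : 'M['F_2]_(n, k), exists e : 'rV['F_2]_k,
      (\rank L == k)%N && (A == [set x : pt n | x *m L == e])]].

(* Sample space of P_unif = q0^{m}: m-tuples of k-flats (uniform on this set). *)
Definition configs (n k m : nat) : {set {ffun 'I_m -> {set pt n}}} :=
  [set V : {ffun 'I_m -> {set pt n}} | [forall j, V j \in flats n k]].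

Definition Zcount (n m : nat) (V : {ffun 'I_m -> {set pt n}}) : nat :=
  #|~: \bigcup_(j < m) V j|.

Definition EZpow (R : numFieldType) (n k m p : nat) : R :=
  ((\sum_(V in configs n k m) ((Zcount V) ^ p)%N)%:R / (#|configs n k m|)%:R)%R.

From HB Require Import structures.
From mathcomp Require Import all_boot all_order all_algebra.
From mathcomp Require Import mxabelem zify ring.
Set Implicit Arguments. Unset Strict Implicit. Unset Printing Implicit Defensive.
Import Order.TTheory GRing.Theory Num.Theory.

(* The inequality holds with eps_n = 0. Since E[Z] = sum_x Pr(x uncovered),
   E[Z^2] = sum_(x,y) Pr(x and y uncovered) and the m flats are independent, it
   suffices that for x != y the events "x uncovered" and "y uncovered" are
   negatively correlated for one uniform k-flat A.  Affine maps act transitively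
   on points and on pairs of distinct points while permuting the k-flats, so the
   k-flats form a 2-design: with P = 2^n points and blocks of size s = 2^(n-k),
   Pr(x, y in A) = Pr(x in A) (s - 1) / (P - 1) <= Pr(x in A)^2. *)

Lemma card_sep_sum (T : finType) (D : {pred T}) (P : pred T) :
  #|[set x in D | P x]| = \sum_(x in D) P x.
Proof.
rewrite -sum1_card big_mkcond [RHS]big_mkcond /=; apply: eq_bigr => x _.
by rewrite !inE; case: (x \in D); case: (P x).
Qed.

Lemma card_sum_mem (T : finType) (A : {pred T}) : #|A| = \sum_x (x \in A).
Proof. by rewrite -sum1_card big_mkcond /=; apply: eq_bigr => x _; case: (x \in A). Qed.

(* Counting in a 2-design with P points and N blocks of size s, each point in c
   blocks and each pair of distinct points in d blocks. *)
Lemma design_pair_count_le (P N s c d : nat) :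
  P * c = N * s -> c + (P - 1) * d = c * s -> s <= P -> 2 <= P -> d * N <= c * c.
Proof.
move=> hPc hcd sP P2; have [s0 | s_gt0] := posnP s; first by subst s; nia.
rewrite -(@leq_pmul2l ((P - 1) * s)); last by rewrite muln_gt0; lia.
have -> : (P - 1) * s * (d * N) = (P - 1) * d * (N * s) by ring.
rewrite -hPc (_ : (P - 1) * d = c * (s - 1)); last by rewrite mulnBr muln1 -hcd addKn.
have -> : c * (s - 1) * (P * c) = c * c * ((s - 1) * P) by ring.
by rewrite [X in _ <= X]mulnC leq_mul2l; apply/orP; right; nia.
Qed.

Section AffineFlats.
Local Open Scope ring_scope.

Lemma unitmx_rV_transitive (F : fieldType) (n : nat) (v w : 'rV[F]_n) :
  v != 0 -> w != 0 -> exists2 M : 'M[F]_n, M \in unitmx & v *m M = w.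
Proof.
have from_e1 (u : 'rV[F]_n) : u != 0 ->
    exists2 Q : 'M[F]_n, Q \in unitmx & u = pid_mx 1 *m Q.
  move=> u0; have := mulmx_ebase u; rewrite rank_rV u0 /=.
  rewrite [col_ebase u]mx11_scalar mul_scalar_mx -scalemxAl scalemxAr => <-.
  exists ((col_ebase u) 0 0 *: row_ebase u) => //.
  rewrite unitmxZ ?row_ebase_unit //.
  by have := col_ebase_unit u; rewrite unitmxE det_mx11.
move=> /from_e1[Q Qu ->] /from_e1[P Pu ->].
exists (invmx Q *m P); first by rewrite unitmx_mul unitmx_inv Qu Pu.
by rewrite !mulmxA mulmxK.
Qed.

Variables (n k : nat).

Definition affine_preimage (M : 'M['F_2]_n) (b : pt n) (A : {set pt n}) :
  {set pt n} := [set x | x *m M + b \in A].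

Lemma affine_preimage_flat M b A :
  M \in unitmx -> A \in flats n k -> affine_preimage M b A \in flats n k.
Proof.
move=> Mu; rewrite !inE => /existsP[L /existsP[e /andP[rL /eqP ->]]].
apply/existsP; exists (M *m L); apply/existsP; exists (e - b *m L).
rewrite eqmxMfull ?row_full_unit // rL /=; apply/eqP/setP => x; rewrite !inE.
by rewrite mulmxDl mulmxA -[RHS](inj_eq (addIr (b *m L))) subrK.
Qed.

Lemma affine_preimage_inj M b : M \in unitmx -> injective (affine_preimage M b).
Proof.
move=> Mu A B /setP eAB; apply/setP => y.
by have := eAB ((y - b) *m invmx M); rewrite !inE mulmxKV // subrK.
Qed.

Lemma affine_preimage_flats M b :
  M \in unitmx -> affine_preimage M b @: flats n k = flats n k.
Proof.
move=> Mu; apply/eqP; rewrite eqEcard card_imset ?leqnn ?andbT.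
  by apply/subsetP => _ /imsetP[A AF ->]; exact: affine_preimage_flat.
exact: affine_preimage_inj.
Qed.

(* A k-flat is a coset of the kernel of its n x k matrix of forms, of rank n - k. *)
Lemma card_flat A : A \in flats n k -> #|A| = (2 ^ (n - k))%N.
Proof.
rewrite inE => /existsP[L /existsP[e /andP[rL /eqP ->]]].
have /submxP[x0 ex0] : (e <= L)%MS by apply: submx_full; exact: rL.
have <- : #|rowg (kermx L)| = (2 ^ (n - k))%N.
  by rewrite card_rowg mxrank_ker (eqP rL) card_Fp.
have -> : [set x : pt n | x *m L == e] = [set x0 + z | z in rowg (kermx L)].
  apply/setP => x; rewrite inE; apply/eqP/imsetP.
    move=> xL; exists (x - x0); last by rewrite addrC subrK.
    by rewrite inE sub_kermx mulmxBl xL ex0 subrr.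
  by move=> [z]; rewrite inE sub_kermx => /eqP z0 ->; rewrite mulmxDl z0 addr0 ex0.
by rewrite card_imset //; apply: addrI.
Qed.

End AffineFlats.

Definition nflats (n k : nat) (P : pred {set pt n}) : nat :=
  #|[set A in flats n k | P A]|.

Definition ncover n k (x : pt n) := nflats k (fun A => x \in A).
Definition ncover2 n k (x y : pt n) := nflats k (fun A => (x \in A) && (y \in A)).
Definition nmiss n k (x : pt n) := nflats k (fun A => x \notin A).
Definition nmiss2 n k (x y : pt n) :=
  nflats k (fun A => (x \notin A) && (y \notin A)).

Section Counting.
Variables (n k : nat).
Local Notation N := #|flats n k|.
Local Notation s := (2 ^ (n - k))%N.

Lemma nflats_affine (M : 'M['F_2]_n) b (P : pred {set pt n}) :
  M \in unitmx -> nflats k (fun A => P (affine_preimage M b A)) = nflats k P.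
Proof.
move=> Mu; rewrite /nflats -[LHS](card_imset _ (affine_preimage_inj (b := b) Mu)).
apply: eq_card => B; rewrite [RHS]inE.
apply/imsetP/andP => [[A] | [BF PB]].
  by rewrite inE => /andP[AF PA] ->; split=> //; exact: affine_preimage_flat.
move: BF; rewrite -{1}(affine_preimage_flats k b Mu) => /imsetP[A AF eB].
by exists A => //; rewrite inE AF -eB.
Qed.

Lemma ncover_const (x x' : pt n) : ncover k x = ncover k x'.
Proof.
rewrite /ncover -(@nflats_affine 1%:M (x - x')%R (fun B => x' \in B)) ?unitmx1 //.
by apply: eq_card => A; rewrite !inE mulmx1 addrC subrK.
Qed.

Lemma ncover2_const (x y x' y' : pt n) :
  x != y -> x' != y' -> ncover2 k x y = ncover2 k x' y'.
Proof.
move=> nxy nxy'.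
have [M Mu eM] : exists2 M : 'M['F_2]_n, M \in unitmx & ((y' - x') *m M = y - x)%R.
  by apply: unitmx_rV_transitive; rewrite subr_eq0 eq_sym.
rewrite /ncover2 -(@nflats_affine M (x - x' *m M)%R
  (fun B => (x' \in B) && (y' \in B))) //.
apply: eq_card => A; rewrite !inE addrC subrK.
by rewrite addrCA -mulmxBl eM addrC subrK.
Qed.

Lemma sum_ncover : \sum_(x : pt n) ncover k x = (N * s)%N.
Proof.
rewrite /ncover /nflats; under eq_bigr do rewrite card_sep_sum.
rewrite exchange_big /= -sum_nat_const; apply: eq_bigr => A AF.
by rewrite -(card_flat AF) card_sum_mem.
Qed.

Lemma sum_ncover2 (x : pt n) : \sum_(y : pt n) ncover2 k x y = (ncover k x * s)%N.
Proof.
rewrite /ncover2 /ncover /nflats; under eq_bigr do rewrite card_sep_sum.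
rewrite exchange_big /= card_sep_sum big_distrl /=; apply: eq_bigr => A AF.
rewrite -(card_flat AF) card_sum_mem big_distrr /=.
by apply: eq_bigr => y _; case: (x \in A); case: (y \in A).
Qed.

Lemma ncover2_le (x y : pt n) : x != y -> (ncover2 k x y * N <= ncover k x ^ 2)%N.
Proof.
move=> nxy; set c := ncover k x; set P := #|{: pt n}|.
have const_c (z : pt n) : ncover k z = c by exact: ncover_const.
apply: (@design_pair_count_le P _ s).
- by rewrite -sum_ncover (eq_bigr (fun=> c)) ?sum_nat_const.
- rewrite -(sum_ncover2 x) (bigD1 x) //=.
  have -> : ncover2 k x x = c by apply: eq_card => A; rewrite !inE andbb.
  rewrite (eq_bigr (fun=> ncover2 k x y)) ?sum_nat_const ?cardC1 ?subn1 //.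
  by move=> z zx; apply: ncover2_const; rewrite // eq_sym.
- by rewrite /P card_mx mul1n card_Fp // leq_pexp2l ?leq_subr.
- by have := max_card [set x; y]; rewrite cards2 nxy.
Qed.

Lemma nmiss_ncover (x : pt n) : (nmiss k x + ncover k x)%N = N.
Proof.
rewrite /nmiss /ncover /nflats !card_sep_sum -big_split /= -sum1_card.
by apply: eq_bigr => A _; case: (x \in A).
Qed.

Lemma nmiss2_ncover2 (x y : pt n) :
  (nmiss2 k x y + ncover k x + ncover k y)%N = (N + ncover2 k x y)%N.
Proof.
rewrite /nmiss2 /ncover /ncover2 /nflats !card_sep_sum -!big_split /=.
rewrite -sum1_card -big_split /=.
by apply: eq_bigr => A _; case: (x \in A); case: (y \in A).
Qed.

Lemma nmiss2_le (x y : pt n) :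
  x != y -> (nmiss2 k x y * N <= nmiss k x * nmiss k y)%N.
Proof.
move=> nxy; have := ncover2_le nxy.
have := nmiss_ncover x; have := nmiss_ncover y; have := nmiss2_ncover2 x y.
rewrite (ncover_const y x); nia.
Qed.

End Counting.

Section Moments.
Variables (n k m : nat).
Local Notation N := #|flats n k|.
Local Notation S1 := (\sum_(x : pt n) nmiss k x ^ m)%N.

Lemma card_configs : #|configs n k m| = (N ^ m)%N.
Proof.
rewrite -[m in RHS](card_ord m) -card_ffun_on; apply: eq_card => V.
by rewrite !inE; apply/forallP/ffun_onP.
Qed.

Lemma sum_configs_all (P : pred {set pt n}) :
  \sum_(V in configs n k m) [forall j, P (V j)] = (nflats k P ^ m)%N.
Proof.
rewrite -card_sep_sum -[m in RHS](card_ord m) -card_ffun_on; apply: eq_card => V.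
rewrite !inE; apply/andP/ffun_onP => [[/forallP VF /forallP PV] j | VFP].
  by rewrite inE VF PV.
by split; apply/forallP => j; have := VFP j; rewrite inE => /andP[].
Qed.

Lemma Zcount_uncovered (V : {ffun 'I_m -> {set pt n}}) :
  Zcount V = \sum_(x : pt n) [forall j, x \notin V j].
Proof.
rewrite /Zcount card_sum_mem; apply: eq_bigr => x _; congr nat_of_bool.
rewrite in_setC; apply/negP/forallP => [notU j | notV /bigcupP[j _ xVj]].
  by apply/negP => xVj; apply: notU; apply/bigcupP; exists j.
by have := notV j; rewrite xVj.
Qed.

Lemma sum_Zcount : \sum_(V in configs n k m) Zcount V ^ 1 = S1.
Proof.
under eq_bigr do rewrite expn1 Zcount_uncovered.
rewrite exchange_big; apply: eq_bigr => x _.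
exact: (sum_configs_all (fun A => x \notin A)).
Qed.

Lemma sum_Zcount_sq :
  \sum_(V in configs n k m) Zcount V ^ 2 =
  \sum_(x : pt n) \sum_(y : pt n) nmiss2 k x y ^ m.
Proof.
under eq_bigr do rewrite Zcount_uncovered expnS expn1 big_distrl /=.
under eq_bigr do under eq_bigr do rewrite big_distrr /=.
rewrite exchange_big; apply: eq_bigr => x _.
rewrite exchange_big; apply: eq_bigr => y _.
rewrite -(sum_configs_all (fun A => (x \notin A) && (y \notin A))).
apply: eq_bigr => V _; rewrite mulnb; congr nat_of_bool.
apply/andP/forallP => [[/forallP xV /forallP yV] j | xyV].
  by rewrite xV yV.
by split; apply/forallP => j; have /andP[] := xyV j.
Qed.

(* The diagonal x = y contributes N^m S1; off the diagonal use nmiss2_le. *)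
Lemma second_moment_le :
  (N ^ m * \sum_(x : pt n) \sum_(y : pt n) nmiss2 k x y ^ m <= N ^ m * S1 + S1 * S1)%N.
Proof.
rewrite [X in X <= _]big_distrr [X in _ <= X + _]big_distrr.
rewrite [X in _ <= _ + X]big_distrl -big_split /=; apply: leq_sum => x _.
rewrite big_distrr [X in _ <= _ + X]big_distrr /=.
rewrite (bigD1 x) //= [in X in _ <= _ + X](bigD1 x) //=.
have -> : nmiss2 k x x = nmiss k x by apply: eq_card => A; rewrite !inE andbb.
rewrite addnA leq_add ?leq_addr //; apply: leq_sum => y yx.
rewrite -!expnMn; have [-> | m_gt0] := posnP m; first by rewrite !expn0.
by rewrite leq_exp2r // mulnC nmiss2_le // eq_sym.
Qed.

End Moments.

Local Open Scope ring_scope.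

Lemma moment_ratio_le (R : numFieldType) (D s1 s2 : nat) :
  (D * s2 <= D * s1 + s1 * s1)%N ->
  (s2%:R / D%:R) / (s1%:R / D%:R) ^+ 2 <= 1 + (s1%:R / D%:R)^-1 :> R.
Proof.
move=> le_s2; have [-> | D_gt0] := posnP D.
  by rewrite invr0 !mulr0 expr0n /= invr0 mulr0 addr0 ler01.
have [-> | s1_gt0] := posnP s1.
  by rewrite !mul0r expr0n /= invr0 mulr0 addr0 ler01.
have DR : (D%:R : R) != 0 by rewrite pnatr_eq0 -lt0n.
have s1R : (s1%:R : R) != 0 by rewrite pnatr_eq0 -lt0n.
have -> : (s2%:R / D%:R) / (s1%:R / D%:R) ^+ 2 = (D * s2)%:R / (s1 * s1)%:R :> R.
  by rewrite !natrM; field; rewrite DR s1R.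
have -> : 1 + (s1%:R / D%:R)^-1 = (D * s1 + s1 * s1)%:R / (s1 * s1)%:R :> R.
  by rewrite natrD !natrM; field; rewrite DR s1R.
by rewrite ler_pM2r ?ler_nat // invr_gt0 ltr0n muln_gt0 s1_gt0.
Qed.

Theorem mainTheorem2 (R : archiRealFieldType) (k : nat) (Delta : R) :
  (1 <= k)%N -> 0 < Delta ->
  exists eps : nat -> R,
    (forall e : R, 0 < e -> exists N : nat, forall n : nat, (N <= n)%N -> `|eps n| < e) /\
    (forall n : nat, (k <= n)%N ->
       let m := Num.truncn (Delta * n%:R) in
       EZpow R n k m 2 / (EZpow R n k m 1) ^+ 2
         <= 1 + eps n + (EZpow R n k m 1)^-1).
Proof.
move=> _ _; exists (fun=> 0); split=> [e e_gt0 | n _ /=].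
  by exists 0%N => n _; rewrite normr0.
rewrite addr0 /EZpow sum_Zcount sum_Zcount_sq card_configs.
exact/moment_ratio_le/second_moment_le.
Qed.
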